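(* In the setting described in the context, for every $t\in\{0,1,\dots,T\}$ the function $\tilde V^{(t)}_\theta(s)$, viewed as a function of $(\theta,s)$, is Lipschitz with constant $L_{\tilde V}^{(t)}=3T^2L_{\tilde R_\theta}\bar L_{\tilde f_\theta}^{T-t-1}$.
   Context: Transitions $s_{t+1}=f(s_t,a_t)+\zeta_t$ with $\zeta_t\sim p(\zeta)$ i.i.d.; deterministic policy $\pi_\theta$ perturbed by action noise $\xi\sim p_\xi$: $a=\pi_\theta(s)+\xi$. Let $\tilde f_\theta(s,\xi)=f(s,\pi_\theta(s)+\xi)$ and $\tilde R_\theta(s)=\mathbb{E}_{p_\xi}[R(s,\pi_\theta(s)+\xi)]$. Value functions: $\tilde V^{(T)}_\theta\equiv0$ and $\tilde V^{(t)}_\theta(s)=\mathbb{E}_{p_\xi(\xi),p(\zeta)}[\tilde R_\theta(s)+\tilde V^{(t+1)}_\theta(\tilde f_\theta(s,\xi)+\zeta)]$. $L_h$ is a Lipschitz constant (Euclidean norm) of $h$ jointly in all its arguments ($(\theta,s)$, resp. $(\theta,s,\xi)$), and $\bar L_h=\max\{L_{\nabla h},L_h,1\}$. Standing assumption: $\tilde f_\theta,\tilde R_\theta$ are Lipschitz and twice continuously differentiable with Lipschitz first derivative. *)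

From HB Require Import structures.
From mathcomp Require Import all_boot all_order all_algebra.
From mathcomp Require Import all_classical all_reals all_analysis.
Set Implicit Arguments. Unset Strict Implicit. Unset Printing Implicit Defensive.
Import Order.TTheory GRing.Theory Num.Theory.
Import numFieldNormedType.Exports.
Local Open Scope classical_set_scope.
Local Open Scope ring_scope.

Section Defs.
Variable R : realType.

Definition enorm (m k : nat) (A : 'M[R]_(m, k)) : R :=
  Num.sqrt (\sum_(i < m) \sum_(j < k) A i j ^+ 2).

Definition ebasis (k : nat) (j : 'I_k) : 'rV[R]_k := delta_mx 0 j.

Definition lipschitz_vec (k n : nat) (L : R) (h : 'rV[R]_k -> 'rV[R]_n) :=
  forall x y, enorm (h x - h y) <= L * enorm (x - y).

Definition lipschitz_scal (k : nat) (L : R) (h : 'rV[R]_k -> R) :=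
  forall x y, `|h x - h y| <= L * enorm (x - y).

Definition twice_cont_diff (k : nat) (V : normedModType R) (h : 'rV[R]_k -> V) :=
  [/\ forall x, differentiable h x,
      forall (j : 'I_k) x, differentiable (fun y => 'D_(ebasis j) h y) x &
      forall (j l : 'I_k),
        continuous (fun y => 'D_(ebasis l) (fun z => 'D_(ebasis j) h z) y)].

(* For vector-valued maps we use the library's Jacobian [jacobian] (derive.v),
   the (k x n) matrix of the differential 'd h x. *)

Definition gradient (k : nat) (h : 'rV[R]_k -> R) (x : 'rV[R]_k) : 'rV[R]_k :=
  \row_(j < k) 'D_(ebasis j) h x.

Variables (dx dz : measure_display) (Ox : measurableType dx) (Oz : measurableType dz).
Variables (Px : probability Ox R) (Pz : probability Oz R).
Variables (p n a : nat).
(* action noise xi ~ p_xi (a random vector in R^a on (Ox,Px)),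
   transition noise zeta ~ p(zeta) (a random vector in R^n on (Oz,Pz)),
   drawn independently (product measure). *)
Variables (xi : Ox -> 'rV[R]_a) (zeta : Oz -> 'rV[R]_n).
Variables (f : 'rV[R]_n -> 'rV[R]_a -> 'rV[R]_n)
          (pi : 'rV[R]_p -> 'rV[R]_n -> 'rV[R]_a)
          (Rw : 'rV[R]_n -> 'rV[R]_a -> R).

Definition ftil (th : 'rV[R]_p) (s : 'rV[R]_n) (e : 'rV[R]_a) : 'rV[R]_n :=
  f s (pi th s + e).

Definition ftilJ (z : 'rV[R]_(p + n + a)) : 'rV[R]_n :=
  ftil (lsubmx (lsubmx z)) (rsubmx (lsubmx z)) (rsubmx z).

Definition Rtil (th : 'rV[R]_p) (s : 'rV[R]_n) : R :=
  Rintegral Px setT (fun w => Rw s (pi th s + xi w)).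

Definition RtilJ (x : 'rV[R]_(p + n)) : R := Rtil (lsubmx x) (rsubmx x).

Fixpoint Vrem (k : nat) (x : 'rV[R]_(p + n)) : R :=
  match k with
  | 0 => 0
  | k'.+1 =>
      Rintegral (Px \x Pz)%E setT
        (fun w : Ox * Oz =>
           RtilJ x
           + Vrem k' (row_mx (lsubmx x)
                         (ftil (lsubmx x) (rsubmx x) (xi w.1) + zeta w.2)))
  end.

Definition Vtil (T t : nat) (x : 'rV[R]_(p + n)) : R := Vrem (T - t) x.

End Defs.

From HB Require Import structures.
From mathcomp Require Import all_boot all_order all_algebra.
From mathcomp Require Import all_classical all_reals all_analysis.
From mathcomp Require Import measurable_realfun.
From mathcomp Require Import ring lra zify.
Import Order.TTheory GRing.Theory Num.Theory.
Import numFieldNormedType.Exports.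
Local Open Scope classical_set_scope.
Local Open Scope ring_scope.
Set Implicit Arguments. Unset Strict Implicit. Unset Printing Implicit Defensive.

(** Write [x = (θ, s)] and [V_k] for the value function with [k] steps to go,
  so that [Ṽ^(t) = V_(T-t)].  One Bellman step moves the reward by at most
  [L_R |Δx|] and the next state [(θ, f̃_θ(s, ξ) + ζ)] by at most
  [|Δθ| + L_f |Δx|], so by induction, with [M = max(L_∇f, L_f, 1)],
  [|ΔV_k| <= L_R (k^2 M^(k-1) |Δθ| + k M^(k-1) |Δx|)];
  keeping [|Δθ|] apart avoids a factor [2^k].  Since [k^2 + k <= 3 T^2] this
  gives the claim.  The expectations make sense because a Lipschitz function
  of the noise is measurable (an infimum of countably many cones
  [h q + K |u - q|] over rational [q]) and is dominated by an affine function
  of the noise norms, which are integrable. *)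

Section EuclideanNorm.
Variable R : realType.

Definition sqnorm k (x : 'rV[R]_k) : R := \sum_j x 0 j ^+ 2.

Lemma enormE k (x : 'rV[R]_k) : enorm x = Num.sqrt (sqnorm x).
Proof. by rewrite /enorm big_ord1. Qed.

Lemma sqnorm_ge0 k (x : 'rV[R]_k) : 0 <= sqnorm x.
Proof. by apply: sumr_ge0 => j _; exact: sqr_ge0. Qed.

Lemma sqnorm_eq0 k (x : 'rV[R]_k) : (sqnorm x == 0) = (x == 0).
Proof.
apply/idP/eqP => [|->]; last by rewrite /sqnorm big1 // => j _; rewrite mxE expr0n.
rewrite psumr_eq0 => [/allP x0|j _]; last exact: sqr_ge0.
apply/rowP => j; rewrite mxE; apply/eqP.
by rewrite -sqrf_eq0; exact: (implyP (x0 j (mem_index_enum j))).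
Qed.

Lemma sqnorm0 k : sqnorm (0 : 'rV[R]_k) = 0.
Proof. by apply/eqP; rewrite sqnorm_eq0. Qed.

Lemma sqnorm_row_mx k1 k2 (x : 'rV[R]_k1) (y : 'rV[R]_k2) :
  sqnorm (row_mx x y) = sqnorm x + sqnorm y.
Proof.
by rewrite /sqnorm big_split_ord; congr (_ + _); apply: eq_bigr => j _;
  rewrite ?row_mxEl ?row_mxEr.
Qed.

Lemma enorm_ge0 k (x : 'rV[R]_k) : 0 <= enorm x.
Proof. by rewrite enormE sqrtr_ge0. Qed.

Lemma sqr_enorm k (x : 'rV[R]_k) : enorm x ^+ 2 = sqnorm x.
Proof. by rewrite enormE sqr_sqrtr ?sqnorm_ge0. Qed.

Lemma enorm_eq0 k (x : 'rV[R]_k) : (enorm x == 0) = (x == 0).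
Proof. by rewrite enormE sqrtr_eq0 -sqnorm_eq0 eq_le sqnorm_ge0 andbT. Qed.

Lemma enorm0 k : enorm (0 : 'rV[R]_k) = 0.
Proof. by apply/eqP; rewrite enorm_eq0. Qed.

Lemma enormN k (x : 'rV[R]_k) : enorm (- x) = enorm x.
Proof. by rewrite !enormE; congr Num.sqrt; apply: eq_bigr => j _; rewrite mxE sqrrN. Qed.

Lemma enorm_distrC k (x y : 'rV[R]_k) : enorm (x - y) = enorm (y - x).
Proof. by rewrite -enormN opprB. Qed.

Lemma cauchy_schwarz_row k (x y : 'rV[R]_k) :
  (\sum_j x 0 j * y 0 j) ^+ 2 <= sqnorm x * sqnorm y.
Proof.
set A := sqnorm x; set B := sqnorm y; set C := \sum_j _.
have [y0|nz_y] := eqVneq y 0.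
  by rewrite /C big1 ?expr0n ?/B ?y0 ?sqnorm0 ?mulr0 // => j _; rewrite mxE mulr0.
have B_gt0 : 0 < B by rewrite lt_def sqnorm_eq0 nz_y sqnorm_ge0.
have : 0 <= \sum_j (B * x 0 j - C * y 0 j) ^+ 2.
  by apply: sumr_ge0 => j _; exact: sqr_ge0.
have -> : \sum_j (B * x 0 j - C * y 0 j) ^+ 2 = B * (A * B - C ^+ 2).
  rewrite (eq_bigr (fun j => B ^+ 2 * x 0 j ^+ 2 - 2 * B * C * (x 0 j * y 0 j)
     + C ^+ 2 * y 0 j ^+ 2)); last by move=> j _; ring.
  rewrite !big_split /= sumrN -!mulr_sumr /A /B /C /sqnorm; ring.
by rewrite pmulr_rge0 // subr_ge0.
Qed.

Lemma ler_enormD k (x y : 'rV[R]_k) : enorm (x + y) <= enorm x + enorm y.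
Proof.
set C := \sum_j x 0 j * y 0 j.
have sqnormD : sqnorm (x + y) = sqnorm x + sqnorm y + 2 * C.
  by rewrite /sqnorm /C mulr_sumr -!big_split /=; apply: eq_bigr => j _; rewrite mxE; ring.
have C_le : C <= enorm x * enorm y.
  rewrite !enormE -sqrtrM ?sqnorm_ge0 //; apply: le_trans (ler_norm _) _.
  by rewrite -sqrtr_sqr ler_sqrt ?mulr_ge0 ?sqnorm_ge0 ?cauchy_schwarz_row.
rewrite -(@ler_pXn2r _ 2) ?nnegrE ?addr_ge0 ?enorm_ge0 //.
by rewrite sqrrD !sqr_enorm sqnormD mulr2n; lra.
Qed.

Lemma enorm_row_mx0 k1 k2 (x : 'rV[R]_k1) : enorm (row_mx x (0 : 'rV[R]_k2)) = enorm x.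
Proof. by rewrite !enormE sqnorm_row_mx sqnorm0 addr0. Qed.

Lemma enorm_row0mx k1 k2 (y : 'rV[R]_k2) : enorm (row_mx (0 : 'rV[R]_k1) y) = enorm y.
Proof. by rewrite !enormE sqnorm_row_mx sqnorm0 add0r. Qed.

Lemma ler_enorm_row_mx k1 k2 (x : 'rV[R]_k1) (y : 'rV[R]_k2) :
  enorm (row_mx x y) <= enorm x + enorm y.
Proof.
have -> : row_mx x y = row_mx x 0 + row_mx 0 y by rewrite add_row_mx addr0 add0r.
by apply: le_trans (ler_enormD _ _) _; rewrite enorm_row_mx0 enorm_row0mx.
Qed.

Lemma ler_enorm_lsubmx k1 k2 (x : 'rV[R]_(k1 + k2)) : enorm (lsubmx x) <= enorm x.
Proof.
rewrite -{2}(hsubmxK x) !enormE sqnorm_row_mx ler_sqrt ?addr_ge0 ?sqnorm_ge0 //.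
by rewrite lerDl sqnorm_ge0.
Qed.

Lemma ler_enorm_rsubmx k1 k2 (x : 'rV[R]_(k1 + k2)) : enorm (rsubmx x) <= enorm x.
Proof.
rewrite -{2}(hsubmxK x) !enormE sqnorm_row_mx ler_sqrt ?addr_ge0 ?sqnorm_ge0 //.
by rewrite lerDr sqnorm_ge0.
Qed.

Lemma lsubmxB k1 k2 (x y : 'rV[R]_(k1 + k2)) : lsubmx (x - y) = lsubmx x - lsubmx y.
Proof. by apply/rowP => j; rewrite !mxE. Qed.

Lemma rsubmxB k1 k2 (x y : 'rV[R]_(k1 + k2)) : rsubmx (x - y) = rsubmx x - rsubmx y.
Proof. by apply/rowP => j; rewrite !mxE. Qed.

End EuclideanNorm.

Section LipschitzMeasurable.
Variable R : realType.

Definition rat_row m (j : nat) : 'rV[R]_m :=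
  if @unpickle 'rV[rat]_m j is Some r then map_mx ratr r else 0.

Lemma rat_row_dense m (v : 'rV[R]_m) (e : R) : 0 < e ->
  exists j, enorm (v - rat_row m j) < e.
Proof.
move=> e_gt0; pose d := e / m.+1%:R.
have m1_gt0 : (0 : R) < m.+1%:R by rewrite ltr0n.
have /fin_all_exists [q qP] : forall j : 'I_m,
    exists q : rat, ratr q \in `]v 0 j - d, v 0 j + d[.
  move=> j; apply: rat_in_itvoo.
  by rewrite ltrD2l -subr_gt0 opprK -mulr2n mulrn_wgt0 ?divr_gt0.
exists (pickle (\row_j q j)); rewrite /rat_row pickleK.
rewrite enormE -[e in _ < e]gtr0_norm // -sqrtr_sqr ltr_sqrt ?exprn_gt0 //.
apply: (@le_lt_trans _ _ (\sum_(j < m) d ^+ 2)).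
  apply: ler_sum => j _; rewrite !mxE.
  by move: (qP j); rewrite in_itv /= => /andP[? ?]; nra.
rewrite sumr_const card_ord.
have -> : d ^+ 2 *+ m = e ^+ 2 * (m%:R / m.+1%:R ^+ 2).
  by rewrite /d -mulr_natr; field; rewrite gt_eqF.
rewrite -[X in _ < X]mulr1 ltr_pM2l ?exprn_gt0 // ltr_pdivrMr ?exprn_gt0 //.
by rewrite mul1r -natrX ltr_nat; nia.
Qed.

Context d (T : measurableType d).

Lemma measurable_enorm_comp m (u : T -> 'rV[R]_m) :
  (forall i, measurable_fun setT (fun w => u w 0 i)) ->
  measurable_fun setT (fun w => enorm (u w)).
Proof.
move=> mu; have -> : (fun w => enorm (u w)) =
    Num.sqrt \o (fun w => \sum_(i <- index_enum 'I_m) u w 0 i ^+ 2).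
  by apply/funext => w; rewrite /= enormE.
apply: measurableT_comp (continuous_measurable_fun (@sqrt_continuous R)) _.
by apply: measurable_sum => i; exact: measurable_funX.
Qed.

Lemma lipschitz_measurable_comp m (h : 'rV[R]_m -> R) (K : R) (u : T -> 'rV[R]_m) :
  0 <= K -> lipschitz_scal K h ->
  (forall i, measurable_fun setT (fun w => u w 0 i)) ->
  measurable_fun setT (h \o u).
Proof.
move=> K_ge0 hK mu.
pose g j w := h (rat_row m j) + K * enorm (u w - rat_row m j).
have mg j : measurable_fun setT (g j).
  apply/measurable_funD/measurable_funM => //; apply: measurable_enorm_comp => i.
  by under eq_fun do rewrite !mxE; exact: measurable_funB.
have g_ge w j : h (u w) <= g j w.
  by rewrite -lerBlDl; apply: le_trans (ler_norm _) (hK _ _).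
have gE w : infs (g^~ w) 0 = h (u w).
  apply/le_anti/andP; split; last first.
    by apply: lb_le_inf => [|_ [j _ <-]]; [exists (g 0%N w), 0%N|exact: g_ge].
  apply/ler_addgt0Pr => e e_gt0.
  have K2_gt0 : 0 < K *+ 2 + 1 by rewrite ltr_wpDl ?mulrn_wge0.
  pose del := e / (K *+ 2 + 1).
  have del_gt0 : 0 < del by rewrite divr_gt0.
  have delE : del * (K *+ 2 + 1) = e by rewrite divfK ?lt0r_neq0.
  have [j lt_del] := rat_row_dense (u w) del_gt0.
  have inf_le : infs (g^~ w) 0 <= g j w.
    by apply: ge_inf; [exists (h (u w)) => _ [i _ <-]|exists j].
  have := hK (rat_row m j) (u w); rewrite enorm_distrC ler_norml => /andP[_ h_le].
  have := ler_wpM2l K_ge0 (ltW lt_del).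
  move: inf_le delE; rewrite /g mulr2n; lra.
apply: (eq_measurable_fun (fun w => infs (g^~ w) 0)) => [w _|]; first exact: gE.
by apply: measurable_fun_infs => // w _; exists (h (u w)) => _ [j _ <-].
Qed.

Lemma lipschitz_integrable_comp (mu : {finite_measure set T -> \bar R}) m
    (h : 'rV[R]_m -> R) (K : R) (u : T -> 'rV[R]_m) :
  0 <= K -> lipschitz_scal K h ->
  (forall i, measurable_fun setT (fun w => u w 0 i)) ->
  mu.-integrable setT (fun w => (enorm (u w))%:E) ->
  mu.-integrable setT (EFin \o (h \o u)).
Proof.
move=> K_ge0 hK mu_ iu.
have := integrableD measurableT (finite_measure_integrable_cst mu `|h 0| measurableT)
  (integrableZl measurableT K iu).
apply: le_integrable => //.
  by apply/measurable_EFinP; exact: lipschitz_measurable_comp hK mu_.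
move=> w _ /=; rewrite lee_fin.
rewrite [X in _ <= X]ger0_norm ?addr_ge0 ?mulr_ge0 ?enorm_ge0 //.
have := hK (u w) 0; have := lerB_dist (h (u w)) (h 0); rewrite subr0; lra.
Qed.

End LipschitzMeasurable.

Section ProbabilityIntegrals.
Context {R : realType}.

Lemma le_normr_RintegralB d (T : measurableType d) (P : probability T R)
    (f g : T -> R) (B : R) :
  P.-integrable setT (EFin \o f) -> P.-integrable setT (EFin \o g) ->
  (forall w, `|f w - g w| <= B) ->
  `|Rintegral P setT f - Rintegral P setT g| <= B.
Proof.
move=> if_ ig fgB; rewrite -(RintegralB measurableT if_ ig).
have ifg : P.-integrable setT (EFin \o (fun w => f w - g w)).
  apply: (eq_integrable measurableT) (integrableB measurableT if_ ig).
  by move=> w _ /=; rewrite EFinB.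
have iB c : P.-integrable setT (EFin \o cst c) by exact: finite_measure_integrable_cst.
have RintB c : Rintegral P setT (cst c) = c.
  by rewrite Rintegral_cst // [X in fine X]probability_setT mulr1.
rewrite ler_norml; apply/andP; split.
  rewrite -[X in X <= _](RintB (- B)); apply: le_Rintegral (iB _) ifg _ => // w _ /=.
  by have := fgB w; rewrite ler_norml => /andP[].
rewrite -[X in _ <= X](RintB B); apply: le_Rintegral ifg (iB _) _ => // w _ /=.
by have := fgB w; rewrite ler_norml => /andP[].
Qed.

Context d1 d2 (T1 : measurableType d1) (T2 : measurableType d2).
Variables (P1 : probability T1 R) (P2 : probability T2 R).

Lemma integrable_prod_fst (g : T1 -> R) : P1.-integrable setT (EFin \o g) ->
  (P1 \x P2)%E.-integrable setT (fun w => (g w.1)%:E).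
Proof.
case/integrableP => mg ig; have mg1 : measurable_fun setT (fun w : T1 * T2 => g w.1).
  by apply: measurableT_comp measurable_fst; exact/measurable_EFinP.
apply/integrableP; split; first exact/measurable_EFinP.
rewrite fubini_tonelli1 //=; last exact/measurable_EFinP/measurableT_comp.
rewrite (eq_integral (fun x => `|(g x)%:E|)%E) // => x _.
by rewrite /fubini_F /= integral_cst // [X in (_ * X)%E]probability_setT mule1.
Qed.

Lemma integrable_prod_snd (g : T2 -> R) : P2.-integrable setT (EFin \o g) ->
  (P1 \x P2)%E.-integrable setT (fun w => (g w.2)%:E).
Proof.
case/integrableP => mg ig; have mg2 : measurable_fun setT (fun w : T1 * T2 => g w.2).
  by apply: measurableT_comp measurable_snd; exact/measurable_EFinP.
apply/integrableP; split; first exact/measurable_EFinP.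
rewrite fubini_tonelli2 //=; last exact/measurable_EFinP/measurableT_comp.
rewrite (eq_integral (fun x => `|(g x)%:E|)%E) // => x _.
by rewrite /fubini_G /= integral_cst // [X in (_ * X)%E]probability_setT mule1.
Qed.

End ProbabilityIntegrals.

Section Bellman.
Variables (R : realType) (dx dz : measure_display) (Ox : measurableType dx)
  (Oz : measurableType dz) (Px : probability Ox R) (Pz : probability Oz R)
  (p n a : nat) (xi : Ox -> 'rV[R]_a) (zeta : Oz -> 'rV[R]_n)
  (f : 'rV[R]_n -> 'rV[R]_a -> 'rV[R]_n)
  (pi : 'rV[R]_p -> 'rV[R]_n -> 'rV[R]_a)
  (Rw : 'rV[R]_n -> 'rV[R]_a -> R) (Lf LR : R).
Hypothesis measurable_xi : forall i : 'I_a, measurable_fun setT (fun w => xi w 0 i).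
Hypothesis measurable_zeta : forall i : 'I_n, measurable_fun setT (fun w => zeta w 0 i).
Hypothesis integrable_xi : Px.-integrable setT (fun w => (enorm (xi w))%:E).
Hypothesis integrable_zeta : Pz.-integrable setT (fun w => (enorm (zeta w))%:E).
Hypothesis ftil_lipschitz : lipschitz_vec Lf (ftilJ f pi (p:=p)).
Hypothesis Rtil_lipschitz : lipschitz_scal LR (RtilJ Px xi pi Rw (p:=p)).

Local Notation P := (Px \x Pz)%E.
Local Notation V := (Vrem Px Pz xi zeta f pi Rw).
Local Notation noise w := (row_mx (xi w.1) (zeta w.2)).

Lemma ftilJ_row_mx th s e : ftilJ f pi (row_mx (row_mx th s) e) = ftil f pi th s e.
Proof. by rewrite /ftilJ !row_mxKl !row_mxKr. Qed.

Lemma ftil_lipschitz_state (x y : 'rV[R]_(p + n)) e :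
  enorm (ftil f pi (lsubmx x) (rsubmx x) e - ftil f pi (lsubmx y) (rsubmx y) e)
  <= Lf * enorm (x - y).
Proof.
rewrite -!ftilJ_row_mx !hsubmxK; apply: le_trans (ftil_lipschitz _ _) _.
by rewrite opp_row_mx add_row_mx subrr enorm_row_mx0.
Qed.

Lemma ftil_lipschitz_noise th s (e e' : 'rV[R]_a) :
  enorm (ftil f pi th s e - ftil f pi th s e') <= Lf * enorm (e - e').
Proof.
rewrite -!ftilJ_row_mx; apply: le_trans (ftil_lipschitz _ _) _.
by rewrite opp_row_mx add_row_mx subrr enorm_row0mx.
Qed.

Lemma measurable_noise i : measurable_fun setT (fun w : Ox * Oz => noise w 0 i).
Proof.
case: (split_ordP i) => j ->.
  under eq_fun do rewrite row_mxEl.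
  by apply: measurableT_comp (measurable_xi j) _; exact: measurable_fst.
under eq_fun do rewrite row_mxEr.
by apply: measurableT_comp (measurable_zeta j) _; exact: measurable_snd.
Qed.

Lemma integrable_enorm_noise : P.-integrable setT (fun w => (enorm (noise w))%:E).
Proof.
have := integrableD measurableT (integrable_prod_fst Pz integrable_xi)
  (integrable_prod_snd Px integrable_zeta).
apply: le_integrable => //.
  by apply/measurable_EFinP; exact: measurable_enorm_comp measurable_noise.
move=> w _ /=; rewrite lee_fin [X in _ <= X]ger0_norm ?addr_ge0 ?enorm_ge0 //.
by rewrite ger0_norm ?enorm_ge0 ?ler_enorm_row_mx.
Qed.

Definition bellman_integrand k (x : 'rV[R]_(p + n)) (w : Ox * Oz) : R :=
  RtilJ Px xi pi Rw x
  + V k (row_mx (lsubmx x) (ftil f pi (lsubmx x) (rsubmx x) (xi w.1) + zeta w.2)).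

Lemma VremS k x : V k.+1 x = Rintegral P setT (bellman_integrand k x).
Proof. by []. Qed.

Lemma integrable_bellman_integrand k (K : R) x : 0 <= K -> lipschitz_scal K (V k) ->
  P.-integrable setT (EFin \o bellman_integrand k x).
Proof.
move=> K_ge0 VK; set th := lsubmx x; set s := rsubmx x.
pose h (v : 'rV[R]_(a + n)) := V k (row_mx th (ftil f pi th s (lsubmx v) + rsubmx v)).
have hK : lipschitz_scal (K * (`|Lf| + 1)) h.
  move=> v v'; apply: le_trans (VK _ _) _.
  rewrite opp_row_mx add_row_mx subrr enorm_row0mx -mulrA ler_wpM2l //.
  rewrite opprD addrACA mulrDl mul1r; apply: le_trans (ler_enormD _ _) _.
  apply: lerD; last by rewrite -rsubmxB ler_enorm_rsubmx.
  apply: le_trans (ftil_lipschitz_noise _ _ _ _) _; rewrite -lsubmxB.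
  apply: le_trans (_ : _ <= `|Lf| * enorm (lsubmx (v - v'))) _.
    by rewrite ler_wpM2r ?enorm_ge0 ?ler_norm.
  by rewrite ler_wpM2l ?ler_enorm_lsubmx.
have hK_ge0 : 0 <= K * (`|Lf| + 1) by rewrite mulr_ge0 ?addr_ge0.
have iR := finite_measure_integrable_cst (P : probability _ R)
  (RtilJ Px xi pi Rw x) measurableT.
have ih := lipschitz_integrable_comp (mu := (P : probability _ R))
  hK_ge0 hK measurable_noise integrable_enorm_noise.
apply: (eq_integrable measurableT) (integrableD measurableT iR ih).
by move=> w _; rewrite /= /h /bellman_integrand row_mxKl row_mxKr EFinD.
Qed.

Lemma Vrem_lipschitzS k (al be : R) : 0 <= al -> 0 <= be ->
  (forall x y, `|V k x - V k y| <=
     al * enorm (lsubmx x - lsubmx y) + be * enorm (x - y)) ->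
  forall x y, `|V k.+1 x - V k.+1 y| <=
     (al + be) * enorm (lsubmx x - lsubmx y) + (LR + Lf * be) * enorm (x - y).
Proof.
move=> al_ge0 be_ge0 Vk x y.
have VK : lipschitz_scal (al + be) (V k).
  move=> x' y'; apply: le_trans (Vk x' y') _; rewrite mulrDl lerD2r ler_wpM2l //.
  by rewrite -lsubmxB ler_enorm_lsubmx.
have iG z := integrable_bellman_integrand z (addr_ge0 al_ge0 be_ge0) VK.
rewrite !VremS; apply: le_normr_RintegralB (iG x) (iG y) _ => w.
pose next z := row_mx (lsubmx z) (ftil f pi (lsubmx z) (rsubmx z) (xi w.1) + zeta w.2).
have next_le : enorm (next x - next y)
    <= enorm (lsubmx x - lsubmx y) + Lf * enorm (x - y).
  rewrite opp_row_mx add_row_mx; apply: le_trans (ler_enorm_row_mx _ _) _.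
  by rewrite lerD2l opprD addrACA subrr addr0 ftil_lipschitz_state.
have := Vk (next x) (next y); rewrite /next !row_mxKl -/(next x) -/(next y).
have := ler_wpM2l be_ge0 next_le; have := Rtil_lipschitz x y.
rewrite /bellman_integrand -/(next x) -/(next y) opprD addrACA.
have := ler_normD (RtilJ Px xi pi Rw x - RtilJ Px xi pi Rw y) (V k (next x) - V k (next y)).
lra.
Qed.

Lemma Vrem_lipschitz (M : R) : 1 <= M -> Lf <= M -> 0 <= LR ->
  forall k x y, `|V k x - V k y| <=
    LR * (k%:R ^+ 2 * M ^+ k.-1) * enorm (lsubmx x - lsubmx y)
    + LR * (k%:R * M ^+ k.-1) * enorm (x - y).
Proof.
move=> M_ge1 Lf_leM LR_ge0; elim=> [|k IHk] x y.
  by rewrite /= subrr normr0 expr0n /= !(mul0r, mulr0) addr0.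
have M_ge0 : 0 <= M := le_trans ler01 M_ge1.
have kMpred : k%:R * M ^+ k.-1 * M = k%:R * M ^+ k.
  by case: k {IHk} => [|k] /=; rewrite ?mul0r // exprSr mulrA.
have Mpred_ge0 : 0 <= M ^+ k.-1 by rewrite exprn_ge0.
have Mpred_le : M ^+ k.-1 <= M ^+ k by rewrite ler_weXn2l // leq_pred.
have M_pow_ge1 : 1 <= M ^+ k by rewrite exprn_ege1.
apply: le_trans (Vrem_lipschitzS _ _ IHk x y) _;
  rewrite ?mulr_ge0 ?sqr_ge0 ?ler0n //= -natr1.
apply: lerD; apply: ler_wpM2r; rewrite ?enorm_ge0 //; last first.
  rewrite mulrCA -[X in X + _]mulr1 -mulrDr ler_wpM2l //.
  have : Lf * (k%:R * M ^+ k.-1) <= k%:R * M ^+ k.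
    by rewrite -kMpred mulrC ler_wpM2l ?mulr_ge0 ?ler0n.
  nra.
rewrite -mulrDr ler_wpM2l //.
have : k%:R ^+ 2 * M ^+ k.-1 <= k%:R ^+ 2 * M ^+ k by rewrite ler_wpM2l ?sqr_ge0.
have : k%:R * M ^+ k.-1 <= k%:R * M ^+ k by rewrite ler_wpM2l ?ler0n.
have : (0 : R) <= k%:R by rewrite ler0n.
nra.
Qed.

End Bellman.

Theorem lemma4 (R : realType)
  (dx dz : measure_display) (Ox : measurableType dx) (Oz : measurableType dz)
  (Px : probability Ox R) (Pz : probability Oz R)
  (p n a : nat)
  (xi : Ox -> 'rV[R]_a) (zeta : Oz -> 'rV[R]_n)
  (f : 'rV[R]_n -> 'rV[R]_a -> 'rV[R]_n)
  (pi : 'rV[R]_p -> 'rV[R]_n -> 'rV[R]_a)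
  (Rw : 'rV[R]_n -> 'rV[R]_a -> R)
  (T : nat) (Lf Ldf LR : R) :
  (* the noises are random vectors with finite first moments *)
  (forall i : 'I_a, measurable_fun setT (fun w => xi w 0 i)) ->
  (forall i : 'I_n, measurable_fun setT (fun w => zeta w 0 i)) ->
  Px.-integrable setT (fun w => (enorm (xi w))%:E) ->
  Pz.-integrable setT (fun w => (enorm (zeta w))%:E) ->
  (* standing assumptions on \tilde f_theta *)
  lipschitz_vec Lf (ftilJ f pi (p:=p)) ->
  twice_cont_diff (ftilJ f pi (p:=p)) ->
  (forall z z', enorm (jacobian (ftilJ f pi (p:=p)) z
                       - jacobian (ftilJ f pi (p:=p)) z')
                <= Ldf * enorm (z - z')) ->
  (* standing assumptions on \tilde R_theta *)
  lipschitz_scal LR (RtilJ Px xi pi Rw (p:=p)) ->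
  twice_cont_diff (RtilJ Px xi pi Rw (p:=p)) ->
  (exists LdR : R, forall x y, enorm (gradient (RtilJ Px xi pi Rw (p:=p)) x
                                      - gradient (RtilJ Px xi pi Rw (p:=p)) y)
                               <= LdR * enorm (x - y)) ->
  forall t : nat, (t <= T)%N ->
    lipschitz_scal
      (3 * (T%:R) ^+ 2 * LR
         * (Num.max Ldf (Num.max Lf 1)) ^ (T%:Z - t%:Z - 1))
      (Vtil Px Pz xi zeta f pi Rw T t).
Proof.
move=> mxi mzeta ixi izeta f_lip _ _ R_lip _ _ t le_tT x y.
have [->|neq_xy] := eqVneq x y; first by rewrite !subrr normr0 enorm0 mulr0.
have LR_ge0 : 0 <= LR.
  have e_gt0 : 0 < enorm (x - y) by rewrite lt_def enorm_eq0 subr_eq0 neq_xy enorm_ge0.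
  by rewrite -(pmulr_lge0 _ e_gt0); apply: le_trans (R_lip x y).
set M := Num.max Ldf (Num.max Lf 1).
have M_ge1 : 1 <= M by rewrite !le_max lexx !orbT.
have Lf_leM : Lf <= M by rewrite !le_max lexx !orbT.
have M_ge0 : 0 <= M := le_trans ler01 M_ge1.
have := Vrem_lipschitz mxi mzeta ixi izeta f_lip R_lip M_ge1 Lf_leM LR_ge0 (T - t) x y.
rewrite /Vtil; case Tt: (T - t)%N => [|k] V_le.
  by rewrite /= subrr normr0 !mulr_ge0 ?exprz_ge0 ?sqr_ge0 ?enorm_ge0.
have -> : T%:Z - t%:Z - 1 = k by lia.
rewrite -exprnP; apply: le_trans V_le _; rewrite /= -/M.
set N := k.+1%:R; set Q := M ^+ k; set e := enorm (x - y).
have Q_ge0 : 0 <= Q by rewrite exprn_ge0.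
have N_le : N ^+ 2 + N <= 3 * T%:R ^+ 2.
  by rewrite /N -natrX -natrD -natrX -[3]/(3%:R) -natrM ler_nat; lia.
have : LR * (N ^+ 2 * Q) * enorm (lsubmx x - lsubmx y) <= LR * (N ^+ 2 * Q) * e.
  by rewrite ler_wpM2l ?mulr_ge0 ?sqr_ge0 // -lsubmxB ler_enorm_lsubmx.
have := ler_wpM2l (mulr_ge0 (mulr_ge0 LR_ge0 Q_ge0) (enorm_ge0 (x - y))) N_le.
rewrite -/e; lra.
Qed.
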